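(* Let $G$ be a finite 3-regular graph with edge set $E(G)$, let $k\ge0$ be an integer, and let $d$ be an integer-valued cellular 1-cochain on $G$ with $d(e)\le k$ for every oriented edge $e$. Let $G'$ be the $\mathbb{Z}$-fold cover of $G$ constructed from $d$. Then there is a number $R$ depending only on $k$ and $|E(G)|$ such that $G'$ contains a simple loop of length at most $2R$.
   Context: A cellular 1-cochain assigns an integer $d(e)$ to each oriented edge $e$ with $d(\bar e)=-d(e)$ for the reversed edge $\bar e$ (so the hypothesis means $|d(e)|\le k$ for all edges). The $\mathbb{Z}$-fold cover $G'$ has vertex set $V(G)\times\mathbb{Z}$, and each edge $e$ of $G$ from $w$ to $v$ lifts to edges from $(w,j)$ to $(v,j+d(e))$ for all $j\in\mathbb{Z}$. Each edge has length $1$; a simple loop is a closed edge path with no repeated vertices. *)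

From mathcomp Require Import all_boot all_order all_algebra.
Set Implicit Arguments. Unset Strict Implicit. Unset Printing Implicit Defensive.
Import Order.TTheory GRing.Theory Num.Theory.
Local Open Scope ring_scope.

(* A finite (multi)graph in the cellular sense, given by darts (oriented edges):
   V vertices, D oriented edges, [rev] the orientation reversal (a fixed-point-free
   involution), [src e] the initial vertex of e; the terminal vertex is src (rev e). *)

Definition is_graph (V D : finType) (rev : D -> D) (src : D -> V) : Prop :=
  (forall e, rev (rev e) = e) /\ (forall e, rev e != e).

(* degree of v = number of oriented edges starting at v (a loop counts twice) *)
Definition three_regular (V D : finType) (src : D -> V) : Prop :=
  forall v : V, #|[set e | src e == v]| = 3%N.

Definition edge_set (D : finType) (rev : D -> D) : {set {set D}} :=
  [set [set e; rev e] | e in D].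

Definition cochain (D : finType) (rev : D -> D) (d : D -> int) : Prop :=
  forall e, d (rev e) = - d e.

(* The Z-fold cover G': vertices V * int, oriented edges D * int;
   the lift (e, j) of e goes from (src e, j) to (tgt e, j + d e). *)
Section Cover.
Variables (V D : finType) (rev : D -> D) (src : D -> V) (d : D -> int).

Definition cover_src (x : D * int) : V * int := (src x.1, x.2).
Definition cover_tgt (x : D * int) : V * int := (src (rev x.1), x.2 + d x.1).
Definition cover_rev (x : D * int) : D * int := (rev x.1, x.2 + d x.1).

(* a simple loop in G': a nonempty cyclic edge path p = [x_0; ...; x_{L-1}]
   (tgt x_i = src x_{i+1}, cyclically), with no repeated vertices and not
   traversing any (unoriented) edge twice; its length is size p. *)
Definition cover_simple_loop (p : seq (D * int)) : Prop :=
  [/\ (0 < size p)%N,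
      cycle (fun x y => cover_tgt x == cover_src y) p,
      uniq (map cover_src p) &
      forall x, x \in p -> cover_rev x \notin p].
End Cover.

From mathcomp Require Import all_boot all_order all_algebra zify.
Import Order.TTheory GRing.Theory Num.Theory.
Set Implicit Arguments. Unset Strict Implicit. Unset Printing Implicit Defensive.
Local Open Scope ring_scope.

(* Fix a dart e0 of G.  By 3-regularity every dart has exactly two non-backtracking
   continuations, so the choice sequences in {0,1}^R give 2^R distinct non-backtracking
   walks of length R in G' starting right after (e0, 0).  Each step changes the height
   by at most k, so all endpoints lie among #|V| (2kR + 1) <= 2m (2kR + 1) < 2^R points
   once R is large in terms of k and m, and two of the walks end at the same vertex.
   Dropping their common prefix and following the rest of one walk backwards and then the
   rest of the other gives a closed walk of length at most 2R which backtracks nowhere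
   except possibly at its base point; cutting out closed subwalks between repeated
   vertices finally leaves a simple loop. *)

Lemma uniq_map_inj (T U : eqType) (f : T -> U) (s : seq T) :
  uniq (map f s) -> {in s &, injective f}.
Proof.
elim: s => //= x s IH /andP[fx_s us] a b; rewrite !inE.
case/orP=> [/eqP->|a_s]; case/orP=> [/eqP->|b_s] // eq_f.
- by move: fx_s; rewrite eq_f map_f.
- by move: fx_s; rewrite -eq_f map_f.
- exact: IH.
Qed.

Lemma map_not_uniq_split (T U : eqType) (f : T -> U) (s : seq T) :
  ~~ uniq (map f s) ->
  exists s1 x s2 y s3, s = s1 ++ x :: s2 ++ y :: s3 /\ f x = f y.
Proof.
elim: s => //= z s IH; rewrite negb_and negbK => /orP[/mapP[y y_s fzy] | /IH].
  by case/splitPr: y_s => s2 s3; exists [::], z, s2, y, s3.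
by case=> s1 [x [s2 [y [s3 [-> fxy]]]]]; exists (z :: s1), x, s2, y, s3.
Qed.

Lemma exists_lin_lt_exp2 a b : exists n, (a * n + b < 2 ^ n)%N.
Proof.
pose j := (2 * a + b + 1)%N; exists (j + j)%N.
have := ltn_expl j (ltnSn 1); rewrite expnD /j; set X := (2 ^ _)%N; nia.
Qed.

Lemma pigeonhole_bounded_height (T U : finType) (f : T -> U * int) c (K : nat) :
  (forall t, `|(f t).2 - c| <= K%:Z) -> (#|U| * (2 * K).+1 < #|T|)%N ->
  exists t1, exists2 t2, t1 != t2 & f t1 = f t2.
Proof.
move=> f_bounded card_lt.
pose g t : U * 'I_(2 * K).+1 := ((f t).1, inord (absz ((f t).2 - c + K%:Z))).
have /injectivePn[t1 [t2 t12 g12]] : ~~ injectiveb g.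
  apply/injectiveP=> /leq_card; rewrite card_prod card_ord; lia.
exists t1; exists t2 => //; case: g12 (f_bounded t1) (f_bounded t2).
case: (f t1) (f t2) => [u1 h1] [u2 h2] /= -> /(congr1 val) /= h12 b1 b2.
by rewrite !inordK in h12; [congr (_, _)|..]; lia.
Qed.

Section BaseGraph.
Variables (V D : finType) (rv : D -> D) (src : D -> V).

Lemma card_darts_le_edges : (#|D| <= 2 * #|edge_set rv|)%N.
Proof.
have D_cover : [set: D] \subset cover (edge_set rv).
  apply/subsetP=> e _; apply/bigcupP; exists [set e; rv e]; last by rewrite !inE eqxx.
  exact: imset_f.
rewrite -cardsT mulnC -sum_nat_const (leq_trans (subset_leq_card D_cover)) //.
rewrite (leq_trans (leq_card_cover _).1) //.
by apply: leq_sum => _ /imsetP[e _ ->]; rewrite cards2; case: (_ != _).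
Qed.

Hypothesis reg : three_regular src.

Lemma card_vertices_le_darts : (#|V| <= #|D|)%N.
Proof.
rewrite -cardsT -[#|D|]cardsT (leq_trans _ (leq_imset_card src _)) //.
apply/subset_leq_card/subsetP=> v _.
have /card_gt0P[e] : (0 < #|[set e | src e == v]|)%N by rewrite reg.
by rewrite inE => /eqP <-; apply: imset_f.
Qed.

Definition successors (x : D) : {set D} := [set f | src f == src (rv x)] :\ rv x.

Lemma card_successors x : #|successors x| = 2%N.
Proof.
have := reg (src (rv x)); rewrite (cardsD1 (rv x)) !inE eqxx /successors; lia.
Qed.

Definition branch x (b : bool) : D := nth x (enum (successors x)) b.

Lemma branch_successor x b : branch x b \in successors x.
Proof. by rewrite -mem_enum mem_nth // -cardE card_successors; case: b. Qed.

Lemma src_branch x b : src (branch x b) = src (rv x).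
Proof. by have := branch_successor x b; rewrite !inE => /andP[_ /eqP]. Qed.

Lemma branch_neq_rev x b : branch x b != rv x.
Proof. by have := branch_successor x b; rewrite !inE => /andP[]. Qed.

Lemma branch_inj x : injective (branch x).
Proof.
have size_enum : size (enum (successors x)) = 2%N by rewrite -cardE card_successors.
by move=> [] [] /eqP; rewrite nth_uniq ?enum_uniq ?size_enum.
Qed.

End BaseGraph.

Section Cover.
Variables (V D : finType) (rv : D -> D) (src : D -> V) (d : D -> int).
Hypothesis rvK : involutive rv.
Hypothesis rv_neq : forall e, rv e != e.
Hypothesis d_rv : forall e, d (rv e) = - d e.

Local Notation cs := (cover_src src).
Local Notation ct := (cover_tgt rv src d).
Local Notation cr := (cover_rev rv d).

Lemma cover_revK : involutive cr.
Proof. by case=> e j; rewrite /cover_rev /= rvK d_rv addrK. Qed.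

Lemma cover_src_rev x : cs (cr x) = ct x.
Proof. by []. Qed.

Lemma cover_tgt_rev x : ct (cr x) = cs x.
Proof. by case: x => e j; rewrite /cover_tgt /cover_src /= rvK d_rv addrK. Qed.

Lemma cover_rev_neq x : cr x != x.
Proof. by case: x => e j; rewrite /cover_rev xpair_eqE negb_and rv_neq. Qed.

(* The vertex sequence of [p] reads [a, tgt p_1, ..., tgt p_n] as well as
   [src p_1, ..., src p_n, b]. *)
Definition cover_path (a : V * int) (p : seq (D * int)) (b : V * int) : bool :=
  a :: map ct p == rcons (map cs p) b.

(* Only consecutive darts are compared: a closed walk may still backtrack at its
   base point. *)
Definition nonbacktracking (p : seq (D * int)) : bool :=
  sorted (fun x y => y != cr x) p.

Definition cover_reverse (p : seq (D * int)) : seq (D * int) := map cr (rev p).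

Lemma cover_path_nil a b : cover_path a [::] b = (a == b).
Proof. by rewrite /cover_path eqseq_cons andbT. Qed.

Lemma cover_path_cons a x p b :
  cover_path a (x :: p) b = (cs x == a) && cover_path (ct x) p b.
Proof. by rewrite /cover_path eqseq_cons eq_sym. Qed.

Lemma cover_pathE a x p b :
  cover_path a (x :: p) b =
  [&& cs x == a, path (fun y z => ct y == cs z) x p & ct (last x p) == b].
Proof.
elim: p a x => [|y p IH] a x; first by rewrite cover_path_cons cover_path_nil.
by rewrite cover_path_cons IH /= -andbA (eq_sym (cs y)).
Qed.

Lemma cover_path_cat a p b q c :
  cover_path a p b -> cover_path b q c -> cover_path a (p ++ q) c.
Proof.
elim: p a => [|x p IH] a; first by rewrite cover_path_nil => /eqP->.
by rewrite /= !cover_path_cons => /andP[-> /IH].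
Qed.

Lemma cover_path_split a p x q b :
  cover_path a (p ++ x :: q) b -> cover_path a p (cs x) && cover_path (cs x) (x :: q) b.
Proof.
elim: p a => [|y p IH] a /= cp.
  by move: (cp); rewrite cover_path_cons cover_path_nil => /andP[/eqP-> _]; rewrite eqxx.
by move: cp; rewrite !(cover_path_cons a y) => /andP[-> /IH].
Qed.

Lemma cover_path_reverse a p b : cover_path a p b -> cover_path b (cover_reverse p) a.
Proof.
rewrite /cover_path /cover_reverse -!map_comp.
rewrite (eq_map cover_tgt_rev) (eq_map cover_src_rev) !map_rev.
by rewrite -rev_rcons -rev_cons (can_eq revK) eq_sym.
Qed.

Lemma nonbacktracking_reverse p : nonbacktracking (cover_reverse p) = nonbacktracking p.
Proof.
rewrite /nonbacktracking /cover_reverse sorted_map rev_sorted.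
by apply: eq_sorted => x y /=; rewrite cover_revK eq_sym.
Qed.

Lemma closed_path_cycle a x q :
  cover_path a (x :: q) a -> cycle (fun y z => ct y == cs z) (x :: q).
Proof. by rewrite cover_pathE /= rcons_path => /and3P[/eqP-> -> ->]. Qed.

Lemma uniq_closed_path_simple_loop a (p : seq (D * int)) :
  p != [::] -> cover_path a p a -> nonbacktracking p -> uniq (map cs p) ->
  cover_simple_loop rv src d p.
Proof.
case: p => // x q _ cp nb uniq_cs.
have linked := closed_path_cycle cp.
have rev_next z : z \in x :: q -> cr z \in x :: q -> cr z = next (x :: q) z.
  move=> zp rzp; apply: (uniq_map_inj uniq_cs) => //; first by rewrite mem_next.
  by rewrite cover_src_rev; apply/eqP; exact: next_cycle linked zp.
have nb_cycle : cycle (fun y z => z != cr y) (x :: q).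
  rewrite /= rcons_path; apply/andP; split=> //; apply/negP=> /eqP x_rev.
  (* Backtracking at the base point would make [cr x] the successor of [x]. *)
  have last_rev : last x q = cr x by rewrite {2}x_rev cover_revK.
  have rx_in : cr x \in x :: q by rewrite -last_rev mem_last.
  have := rev_next x (mem_head x q) rx_in.
  rewrite next_nth mem_head /= eqxx nth0.
  case: q nb {linked rev_next x_rev last_rev rx_in cp uniq_cs} => [|y q] /=.
    by move=> _ rx_x; move: (cover_rev_neq x); rewrite rx_x eqxx.
  by case/andP=> /eqP y_rev _ /esym/y_rev.
split=> // z zp; apply/negP=> rzp.
by have := next_cycle nb_cycle zp; rewrite -rev_next // eqxx.
Qed.

Lemma closed_path_simple_loop a (p : seq (D * int)) :
  p != [::] -> cover_path a p a -> nonbacktracking p ->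
  exists2 s, cover_simple_loop rv src d s & (size s <= size p)%N.
Proof.
have [n] := ubnP (size p); elim: n a p => // n IH a p size_p p0 cp nb.
have [uniq_cs | /map_not_uniq_split[p1 [z [p2 [y [p3 [p_eq cs_zy]]]]]]] :=
  boolP (uniq (map cs p)).
  by exists p => //; exact: uniq_closed_path_simple_loop cp nb uniq_cs.
have sub_closed : cover_path (cs z) (z :: p2) (cs y).
  move: cp; rewrite p_eq => /cover_path_split/andP[_].
  by rewrite -cat_cons => /cover_path_split/andP[].
have sub_nb : nonbacktracking (z :: p2).
  by move: nb; rewrite /nonbacktracking p_eq -cat_cons => /cat_sorted2[_ /cat_sorted2[]].
rewrite -cs_zy in sub_closed.
have size_lt : (size (z :: p2) < size p)%N by rewrite p_eq size_cat /= size_cat /=; lia.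
have [|s loop_s size_s] := IH _ (z :: p2) _ isT sub_closed sub_nb.
  exact: leq_trans size_lt size_p.
by exists s; last exact: leq_trans size_s (ltnW size_lt).
Qed.

Lemma size_cover_reverse p : size (cover_reverse p) = size p.
Proof. by rewrite size_map size_rev. Qed.

Lemma distinct_paths_closed_path p1 p2 a b :
  cover_path a p1 b -> cover_path a p2 b -> nonbacktracking p1 -> nonbacktracking p2 ->
  p1 != p2 ->
  exists c (q : seq (D * int)), [/\ q != [::], cover_path c q c, nonbacktracking q
                & (size q <= size p1 + size p2)%N].
Proof.
elim: p1 p2 a => [|x p1 IH] [|y p2] a //.
- by rewrite cover_path_nil => /eqP <- cp2 _ nb2 _; exists a, (y :: p2).
- by rewrite cover_path_nil addn0 => cp1 /eqP ab nb1 _ _; subst b; exists a, (x :: p1).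
have [-> | y_x] := eqVneq y x.
  rewrite !cover_path_cons eqseq_cons eqxx => /andP[_ cp1] /andP[_ cp2] nb1 nb2 ne.
  have [c [q [q0 cq nbq size_q]]] := IH _ _ cp1 cp2 (path_sorted nb1) (path_sorted nb2) ne.
  by exists c, q; split=> //=; lia.
move=> cp1 cp2 nb1 nb2 _; exists b, (cover_reverse (x :: p1) ++ y :: p2); split.
- by case: (cover_reverse _).
- exact: cover_path_cat (cover_path_reverse cp1) cp2.
- have rev_x : cover_reverse (x :: p1) = rcons (cover_reverse p1) (cr x).
    by rewrite /cover_reverse rev_cons map_rcons.
  rewrite /nonbacktracking rev_x cat_rcons sorted_cat_cons -rev_x /= cover_revK y_x.
  by rewrite -[sorted _ _]/(nonbacktracking _) nonbacktracking_reverse nb1.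
- by rewrite size_cat size_cover_reverse.
Qed.

Lemma cover_path_height (k : nat) a p b :
  (forall e, `|d e| <= k%:Z) -> cover_path a p b -> `|b.2 - a.2| <= (k * size p)%N%:Z.
Proof.
move=> d_bounded; elim: p a => [|x p IH] a.
  by rewrite cover_path_nil => /eqP->; rewrite subrr.
rewrite cover_path_cons => /andP[/eqP x_a /IH]; have := d_bounded x.1.
by rewrite -x_a /=; lia.
Qed.

Hypothesis reg : three_regular src.

Definition cover_branch (x : D * int) (b : bool) : D * int :=
  (branch rv src x.1 b, x.2 + d x.1).

Fixpoint branch_walk (x : D * int) (bs : seq bool) : seq (D * int) :=
  if bs is b :: bs' then cover_branch x b :: branch_walk (cover_branch x b) bs' else [::].

Lemma size_branch_walk x bs : size (branch_walk x bs) = size bs.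
Proof. by elim: bs x => //= b bs IH x; rewrite IH. Qed.

Lemma branch_walk_inj x : injective (branch_walk x).
Proof.
move=> bs1 bs2; elim: bs1 bs2 x => [|b1 bs1 IH] [|b2 bs2] x //= [/(branch_inj reg) b12].
by rewrite b12 => /IH ->.
Qed.

Lemma nonbacktracking_branch_walk (x : D * int) bs : nonbacktracking (x :: branch_walk x bs).
Proof.
elim: bs x => //= b bs IH x; rewrite IH andbT.
by rewrite /cover_branch /cover_rev xpair_eqE negb_and branch_neq_rev.
Qed.

Lemma cover_path_branch_walk x bs :
  cover_path (ct x) (branch_walk x bs) (ct (last x (branch_walk x bs))).
Proof.
elim: bs x => [|b bs IH] x /=; first by rewrite cover_path_nil.
by rewrite cover_path_cons IH andbT /cover_branch /cover_src /cover_tgt /= src_branch.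
Qed.

End Cover.

Theorem lemma2p3 :
  forall k m : nat, exists R : nat,
  forall (V D : finType) (rev : D -> D) (src : D -> V) (d : D -> int),
    is_graph rev src ->
    three_regular src ->
    (0 < #|V|)%N ->
    #|edge_set rev| = m ->
    cochain rev d ->
    (forall e, d e <= k%:Z) ->
    exists p : seq (D * int),
      cover_simple_loop rev src d p /\ (size p <= 2 * R)%N.
Proof.
move=> k m; have [R HR] := exists_lin_lt_exp2 (4 * m * k) (2 * m).
exists R => V D rv src d [rvK rv_neq] reg /card_gt0P[v _] card_edges d_rv d_le.
have d_bounded e : `|d e| <= k%:Z by have := d_le (rv e); rewrite d_rv; have := d_le e; lia.
have card_V : (#|V| <= 2 * m)%N.
  by rewrite -card_edges (leq_trans (card_vertices_le_darts reg) (card_darts_le_edges rv)).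
have /card_gt0P[e0 _] : (0 < #|[set e | src e == v]|)%N by rewrite reg.
pose x := (e0, 0 : int); pose walk (t : R.-tuple bool) := branch_walk rv src d x t.
pose walk_end t := cover_tgt rv src d (last x (walk t)).
have walk_path t : cover_path rv src d (cover_tgt rv src d x) (walk t) (walk_end t).
  exact: cover_path_branch_walk.
have size_walk t : size (walk t) = R by rewrite size_branch_walk size_tuple.
have walk_end_height t : `|(walk_end t).2 - (cover_tgt rv src d x).2| <= (k * R)%N%:Z.
  by have := cover_path_height d_bounded (walk_path t); rewrite size_walk.
have card_ends : (#|V| * (2 * (k * R)).+1 < #|{: R.-tuple bool}|)%N.
  by rewrite card_tuple card_bool; have := leq_mul card_V (leqnn (2 * (k * R)).+1); lia.
have [t1 [t2 t12 end12]] := pigeonhole_bounded_height walk_end_height card_ends.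
have walks_neq : walk t1 != walk t2 by apply: contra t12 => /eqP/(branch_walk_inj reg)/val_inj->.
have [|c [q [q0 q_closed q_nb size_q]]] := distinct_paths_closed_path rvK d_rv
  (walk_path t1) _ (path_sorted (nonbacktracking_branch_walk rv d reg x t1))
  (path_sorted (nonbacktracking_branch_walk rv d reg x t2)) walks_neq.
  by rewrite end12; exact: walk_path.
have [s s_loop size_s] := closed_path_simple_loop rvK rv_neq d_rv q0 q_closed q_nb.
by exists s; split=> //; rewrite !size_walk in size_q; lia.
Qed.
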